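(* In the setting of the context, for all tuples $(T,L)\in\{1,\ldots,L\}\times\mathbb N_+$ and any $u_{\mathrm{cut}}\in\{1,\ldots,p-1\}$, $$\widehat V'^{\,+}_{T,L}(0.5,\rho_{\mathrm{thr}}(u_{\mathrm{cut}}+1))\le\widehat V'^{\,+}_{T,L}(0.5,\rho_{\mathrm{thr}}(u_{\mathrm{cut}})).$$
   Context: Data: $\boldsymbol X=[\boldsymbol x_1\cdots\boldsymbol x_p]\in\mathbb R^{n\times p}$ with standardized columns, $\boldsymbol y\in\mathbb R^n$. T-Rex framework: fix $K,L\ge1$; for $k=1,\ldots,K$ append a dummy matrix $\mathring{\boldsymbol X}_k\in\mathbb R^{n\times L}$ (i.i.d. entries from a univariate distribution with finite mean and variance), run a forward selection method (at most one variable per iteration) on $(\boldsymbol y,[\boldsymbol X\ \mathring{\boldsymbol X}_k])$ and terminate once $t$ dummies are included, $t\in\{1,\ldots,L\}$; $\mathcal C_{k,L}(t)$ = original variables included before termination; $\Phi_{t,L}(j)=\frac1K\sum_k\mathbb 1\{j\in\mathcal C_{k,L}(t)\}$. Dendrogram groups: with $\rho_{j,j'}=\boldsymbol x_j^\top\boldsymbol x_{j'}$, agglomerative hierarchical clustering with distance $1-|\rho|$ (single, complete, or average linkage) gives merge heights $c_1\ge\cdots\ge c_{p-1}$; set $c_0=1$, $c_p=0$, $\rho_{\mathrm{thr}}(u)=1-c_u$ for $u=1,\ldots,p$; $\mathrm{Gr}(j,\rho_{\mathrm{thr}}(u_{\mathrm{cut}}))$ is the set of $j'\neq j$ in the same cluster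 as $j$ when the dendrogram is cut at distance $1-\rho_{\mathrm{thr}}(u_{\mathrm{cut}})$. For $t\in\{1,\ldots,T\}$ define $\Psi^+_{t,L}(j,\rho)=\big(2-\min_{j'\in\mathrm{Gr}(j,\rho)}|\Phi_{T,L}(j)-\Phi_{T,L}(j')|\big)^{-1}$ if $\mathrm{Gr}(j,\rho)\ne\varnothing$ and $\Psi^+_{t,L}(j,\rho)=1$ otherwise, and $$\widehat V'^{\,+}_{T,L}(0.5,\rho)=\sum_{t=1}^T\frac{p-\sum_{q=1}^p\Psi^+_{t,L}(q,\rho)\cdot\Phi_{t,L}(q)}{L-(t-1)}.$$ *)

From mathcomp Require Import all_boot all_order all_algebra.
Set Implicit Arguments. Unset Strict Implicit. Unset Printing Implicit Defensive.
Import Order.TTheory GRing.Theory Num.Theory.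
Local Open Scope ring_scope.

Section TRex.
Variable R : realFieldType.

(* minimum / maximum of f over a finite set A (meaningful for A nonempty) *)
Definition setmin (T : finType) (A : {set T}) (f : T -> R) : R :=
  let s := [seq f x | x in A] in \big[Num.min/head 0 s]_(x <- s) x.
Definition setmax (T : finType) (A : {set T}) (f : T -> R) : R :=
  let s := [seq f x | x in A] in \big[Num.max/head 0 s]_(x <- s) x.

Variables (n p : nat).

Definition rho (X : 'M[R]_(n, p)) (j j' : 'I_p) : R := \sum_(i < n) X i j * X i j'.
Definition cdist (X : 'M[R]_(n, p)) (j j' : 'I_p) : R := 1 - `|rho X j j'|.

Definition standardized (X : 'M[R]_(n, p)) : Prop :=
  forall j : 'I_p, \sum_(i < n) X i j = 0 /\ \sum_(i < n) X i j ^+ 2 = 1.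

Inductive linkage := Single | Complete | Average.

Definition link_dist (lk : linkage) (X : 'M[R]_(n, p)) (A B : {set 'I_p}) : R :=
  match lk with
  | Single => setmin (setX A B) (fun ab => cdist X ab.1 ab.2)
  | Complete => setmax (setX A B) (fun ab => cdist X ab.1 ab.2)
  | Average => (\sum_(a in A) \sum_(b in B) cdist X a b) / (#|A| * #|B|)%:R
  end.

(* An agglomerative hierarchical clustering run: P u is the partition with u
   clusters (u = 1..p); P p is the partition into singletons; P u is obtained
   from P u.+1 by merging two distinct clusters of minimal linkage distance,
   and c u is the height of that merge. *)
Definition agglomerative (lk : linkage) (X : 'M[R]_(n, p))
    (P : nat -> {set {set 'I_p}}) (c : nat -> R) : Prop :=
  P p = [set [set j] | j : 'I_p] /\
  forall u : nat, (1 <= u <= p.-1)%N ->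
    exists A B : {set 'I_p},
      [/\ A \in P u.+1, B \in P u.+1, A != B &
          [/\ (forall A' B', A' \in P u.+1 -> B' \in P u.+1 -> A' != B' ->
              link_dist lk X A B <= link_dist lk X A' B'),
          P u = (P u.+1 :\ A :\ B) :|: [set A :|: B] &
          c u = link_dist lk X A B]].

(* Gr(j, rho_thr(u)): the other members of j's cluster when the dendrogram is
   cut at distance 1 - rho_thr(u) = c_u, i.e. into the u clusters of P u. *)
Definition Gr (P : nat -> {set {set 'I_p}}) (u : nat) (j : 'I_p) : {set 'I_p} :=
  [set j' in pblock (P u) j | j' != j].

Definition Phi (K : nat) (C : nat -> 'I_K -> {set 'I_p}) (t : nat) (j : 'I_p) : R :=
  K%:R^-1 * \sum_(k < K) (j \in C t k)%:R.

(* Psi^+_{t,L}(j, rho_thr(u)) (uses Phi_{T,L}, independent of t) *)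
Definition Psi (K : nat) (C : nat -> 'I_K -> {set 'I_p}) (T : nat)
    (P : nat -> {set {set 'I_p}}) (u : nat) (j : 'I_p) : R :=
  if Gr P u j == set0 then 1
  else (2 - setmin (Gr P u j) (fun j' => `|Phi C T j - Phi C T j'|))^-1.

Definition Vhat (K : nat) (C : nat -> 'I_K -> {set 'I_p}) (T L : nat)
    (P : nat -> {set {set 'I_p}}) (u : nat) : R :=
  \sum_(1 <= t < T.+1)
     (p%:R - \sum_(q < p) Psi C T P u q * Phi C t q) / (L - t.-1)%:R.

End TRex.

(** Cutting the dendrogram into [u] rather than [u + 1] clusters merges two
    clusters and changes nothing else, so every group [Gr(j, .)] can only grow.
    Over a larger group the minimum of [|Phi_T(j) - Phi_T(j')|] (a number in
    [[0, 1]]) can only drop, so [Psi^+ = (2 - min)^-1] drops as well; a group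
    becoming nonempty sends [Psi^+] from [1] to some [(2 - m)^-1 <= 1].  Since
    every [Phi_t(q)] is nonnegative, the subtracted sums in [Vhat] shrink,
    hence [Vhat] grows when passing from [u + 1] to [u]. *)
From mathcomp Require Import all_boot all_order all_algebra.
From mathcomp Require Import zify lra.
Set Implicit Arguments. Unset Strict Implicit. Unset Printing Implicit Defensive.
Import Order.TTheory GRing.Theory Num.Theory.
Local Open Scope ring_scope.

Section SetMin.
Variables (R : realFieldType) (T : finType).
Implicit Types (A B : {set T}) (f : T -> R).

Lemma setmin_le A f x : x \in A -> setmin A f <= f x.
Proof. by move=> xA; apply: ge_bigmin_seq => //; apply: image_f. Qed.

Lemma le_setmin A f m : A != set0 -> (forall x, x \in A -> m <= f x) ->
  m <= setmin A f.
Proof.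
case/set0Pn => x0 x0A mf; rewrite /setmin big_seq.
have mfs y : y \in [seq f x | x in A] -> m <= y by case/imageP => x /mf + ->.
apply: le_bigmin => [|y /mfs //]; apply: mfs.
by case: [seq f x | x in A] (image_f f x0A) => //= y s _; apply: mem_head.
Qed.

Lemma setmin_subset A B f : A != set0 -> A \subset B -> setmin B f <= setmin A f.
Proof. by move=> An0 /subsetP AB; apply: le_setmin => // x /AB; apply: setmin_le. Qed.

End SetMin.

Section Merge.
Variable T : finType.
Implicit Types (Q : {set {set T}}) (A B : {set T}).

Definition merge Q A B := (Q :\ A :\ B) :|: [set A :|: B].

Lemma trivIset_merge Q A B : trivIset Q -> A \in Q -> B \in Q ->
  trivIset (merge Q A B).
Proof.
move=> tQ AQ BQ; rewrite /merge setUC.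
apply: trivIsetU; [exact: trivIset1 | exact/trivIsetD/trivIsetD |].
rewrite cover1; apply: bigcup_disjoint => D; rewrite !inE => /and3P [DB DA DQ].
move/trivIsetP: tQ => tQ; rewrite -setI_eq0 setIUl.
by rewrite !disjoint_setI0 ?setU0 // tQ // eq_sym.
Qed.

Lemma pblock_merge Q A B j : trivIset Q -> A \in Q -> B \in Q ->
  pblock Q j \subset pblock (merge Q A B) j.
Proof.
move=> tQ AQ BQ; have tQ' := trivIset_merge tQ AQ BQ.
have [jQ|jNQ] := boolP (j \in cover Q); last first.
  rewrite {1}/pblock; case: pickP => [D /andP [DQ jD] | _]; last exact: sub0set.
  by case/negP: jNQ; apply/bigcupP; exists D.
have DQ := pblock_mem jQ; have jD : j \in pblock Q j by rewrite mem_pblock.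
set D := pblock Q j in DQ jD *.
have [DAB|DNAB] := boolP ((D == A) || (D == B)).
  have ABQ' : A :|: B \in merge Q A B by rewrite !inE eqxx orbT.
  have jAB : j \in A :|: B by case/orP: DAB => /eqP <-; rewrite inE jD ?orbT.
  rewrite (def_pblock tQ' ABQ' jAB).
  by case/orP: DAB => /eqP ->; [apply: subsetUl | apply: subsetUr].
have DQ' : D \in merge Q A B.
  by rewrite !inE DQ; move: DNAB; rewrite negb_or => /andP [-> ->].
by rewrite (def_pblock tQ' DQ' jD).
Qed.

End Merge.

Lemma down_ind (Pr : nat -> Prop) lo hi : Pr hi ->
    (forall v, (lo <= v < hi)%N -> Pr v.+1 -> Pr v) ->
  forall v, (lo <= v <= hi)%N -> Pr v.
Proof.
move=> Pr_hi step v /andP [lov vhi]; have [d hid] : exists d, hi = (v + d)%N.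
  by exists (hi - v)%N; lia.
elim: d v lov vhi hid => [|d IH] v lov vhi hid; first by rewrite hid addn0 in Pr_hi.
by apply: step; [lia | apply: IH; lia].
Qed.

Section Dendrogram.
Variables (R : realFieldType) (n p : nat) (X : 'M[R]_(n, p)) (lk : linkage).
Variables (P : nat -> {set {set 'I_p}}) (c : nat -> R).
Hypothesis hP : agglomerative lk X P c.

Lemma agglomerative_merge u : (1 <= u <= p.-1)%N ->
  exists A B, [/\ A \in P u.+1, B \in P u.+1 & P u = merge (P u.+1) A B].
Proof. by case: hP => _ /(_ u) step /step [A [B [AQ BQ _ [_ -> _]]]]; exists A, B. Qed.

Lemma agglomerative_trivIset u : (1 <= u <= p)%N -> trivIset (P u).
Proof.
move: u; apply: (@down_ind (fun v => trivIset (P v))) => [|v hv tPv].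
  case: hP => -> _.
  apply/trivIsetP => _ _ /imsetP [a _ ->] /imsetP [b _ ->] ab.
  by rewrite disjoint_sym disjoints1 inE; apply: contra ab => /eqP ->.
have [|A [B [AQ BQ ->]]] := agglomerative_merge (u := v); first lia.
exact: trivIset_merge.
Qed.

Lemma Gr_succ_subset u j : (1 <= u <= p.-1)%N -> Gr P u.+1 j \subset Gr P u j.
Proof.
move=> hu; have [A [B [AQ BQ Pu]]] := agglomerative_merge hu.
have tQ : trivIset (P u.+1) by apply: agglomerative_trivIset; lia.
apply/subsetP => x; rewrite !inE Pu => /andP [xj ->]; rewrite andbT.
exact: subsetP (pblock_merge j tQ AQ BQ) x xj.
Qed.

End Dendrogram.

Section Scores.
Variables (R : realFieldType) (p K : nat) (C : nat -> 'I_K -> {set 'I_p}).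

Lemma Phi_ge0 t j : 0 <= Phi R C t j.
Proof. by rewrite mulr_ge0 ?invr_ge0 ?sumr_ge0. Qed.

Lemma Phi_le1 t j : Phi R C t j <= 1.
Proof.
rewrite /Phi; case: (posnP K) => [K0 | K_gt0].
  by rewrite (_ : K%:R^-1 = 0) ?mul0r // K0 invr0.
rewrite mulrC ler_pdivrMr ?ltr0n // mul1r.
apply: le_trans (_ : _ <= \sum_(k < K) 1) _; last by rewrite sumr_const card_ord.
by apply: ler_sum => k _; case: (j \in C t k).
Qed.

Lemma Phi_dist_le1 t j j' : `|Phi R C t j - Phi R C t j'| <= 1.
Proof.
have := Phi_ge0 t j; have := Phi_le1 t j.
have := Phi_ge0 t j'; have := Phi_le1 t j'.
rewrite ler_norml; lra.
Qed.

Variables (T : nat) (P : nat -> {set {set 'I_p}}).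

Lemma Psi_antitone u v q : Gr P v q \subset Gr P u q ->
  Psi R C T P u q <= Psi R C T P v q.
Proof.
move=> Gvu; rewrite /Psi.
set f := fun j' => `|Phi R C T q - Phi R C T j'|.
have setmin_le1 G : G != set0 -> setmin G f <= 1.
  by case/set0Pn => x xG; apply: le_trans (setmin_le f xG) (Phi_dist_le1 _ _ _).
have [Gu0 | Gun0] := eqVneq (Gr P u q) set0.
  by move: Gvu; rewrite Gu0 subset0 => ->.
have mu1 := setmin_le1 _ Gun0.
have [_ | Gvn0] := eqVneq (Gr P v q) set0; first by rewrite invf_le1; lra.
have mv1 := setmin_le1 _ Gvn0.
have muv : setmin (Gr P u q) f <= setmin (Gr P v q) f by exact: setmin_subset.
by rewrite lef_pV2 ?posrE; lra.
Qed.

Lemma Vhat_le L u v : (forall q, Psi R C T P u q <= Psi R C T P v q) ->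
  Vhat R C T L P v <= Vhat R C T L P u.
Proof.
move=> Psi_uv; apply: ler_sum => t _; rewrite ler_wpM2r ?invr_ge0 ?ler0n //.
by rewrite lerB // ler_sum // => q _; rewrite ler_wpM2r ?Phi_ge0.
Qed.

End Scores.

Theorem lemma3 (R : realFieldType) (n p K L T : nat)
    (X : 'M[R]_(n, p)) (hX : standardized X)
    (lk : linkage) (P : nat -> {set {set 'I_p}}) (c : nat -> R)
    (hP : agglomerative lk X P c)
    (C : nat -> 'I_K -> {set 'I_p})
    (hK : (0 < K)%N) (hL : (0 < L)%N) (hT : (1 <= T <= L)%N)
    (u : nat) (hu : (1 <= u <= p.-1)%N) :
  Vhat R C T L P u.+1 <= Vhat R C T L P u.
Proof.
apply: Vhat_le => q; apply: Psi_antitone.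
exact: Gr_succ_subset hP u q hu.
Qed.
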